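(* Let $n \ge 2$, let $\bm{\zeta} = \zeta_1\zeta_2\cdots\zeta_n \in \{0,1\}^n$, and let $\mathcal{H}_C = \sum_{x\in\{0,1\}^n} f(x)\,|x\rangle\langle x|$ (with $f:\{0,1\}^n\to\mathbb{R}$) be an $n$-qubit cost Hamiltonian, diagonal in the computational basis, such that $\mathcal{H}_C|\bm{\zeta}\rangle = 0$. For $\beta\in\mathbb{R}$ define the constrained mixing unitary $$\mathcal{U}_M^{CM}(\beta) := G_n(\beta)\,G_{n-1}(\beta)\cdots G_1(\beta),$$ where $G_i(\beta)$ is the gate that applies the rotation $R_X(\beta)=e^{-i\beta X/2}$ to qubit $1+(i \bmod n)$, controlled by qubit $i$, the control being triggered when qubit $i$ is in state $|0\rangle$ if $\zeta_i=1$ and in state $|1\rangle$ if $\zeta_i=0$ (i.e. $G_i(\beta) = |\zeta_i\rangle\langle\zeta_i|_{i}\otimes I + |1-\zeta_i\rangle\langle 1-\zeta_i|_{i}\otimes R_X(\beta)_{1+(i \bmod n)}$, tensored with identity on the remaining qubits). Let $p\ge 1$, let $\bm{\beta}=(\beta_1,\dots,\beta_p),\bm{\gamma}=(\gamma_1,\dots,\gamma_p)\in\mathbb{R}^p$ be arbitrary, let $|s\rangle$ be any $n$-qubit state (e.g. $|s\rangle = H^{\otimes n}|0^{\otimes n}\rangle$), and let $$|\psi_{\mathrm{QAOA}}\rangle = \mathcal{U}_M^{CM}(\beta_p)e^{-i\gamma_p\mathcal{H}_C}\cdots\mathcal{U}_M^{CM}(\beta_2)e^{-i\gamma_2\mathcal{H}_C}\,\mathcal{U}_M^{CM}(\beta_1)e^{-i\gamma_1\mathcal{H}_C}|s\rangle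 .$$ Then the amplitude of $|\bm{\zeta}\rangle$ is left invariant, i.e. $\langle\bm{\zeta}|\psi_{\mathrm{QAOA}}\rangle = \langle\bm{\zeta}|s\rangle$; in particular $\langle\psi_{\mathrm{QAOA}}|P_{\bm{\zeta}}|\psi_{\mathrm{QAOA}}\rangle = \langle s|P_{\bm{\zeta}}|s\rangle$ where $P_{\bm{\zeta}}=|\bm{\zeta}\rangle\langle\bm{\zeta}|$.
   Context: This is the ''controlled-mixer QAOA'' (CM-QAOA): a QAOA (Quantum Alternating Operator Ansatz) in which the standard mixer is replaced by $\mathcal{U}_M^{CM}$. In the application, $\mathcal{H}_C$ encodes squared lengths of lattice vectors $\vec{x}B$ for coefficient bitstrings, and $|\bm{\zeta}\rangle$ is the computational basis state encoding the zero lattice vector (so $\mathcal{H}_C|\bm{\zeta}\rangle=0$). $X$ denotes the Pauli-X operator and $H$ the Hadamard gate. *)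

From HB Require Import structures.
From mathcomp Require Import all_boot all_order all_algebra.
From mathcomp Require Import complex.
From mathcomp Require Import reals trigo.
Set Implicit Arguments. Unset Strict Implicit. Unset Printing Implicit Defensive.
Import Order.TTheory GRing.Theory Num.Theory.
Local Open Scope ring_scope.
Local Open Scope complex_scope.

(* computational basis of n qubits; qubits are 0-indexed: qubit k+1 of the
   paper is index k : 'I_n *)
Notation basis n := {ffun 'I_n -> bool}.

Notation qstate R n := {ffun basis n -> R[i]}.

Definition ket (R : realType) (n : nat) (z : basis n) : qstate R n :=
  [ffun x => if x == z then 1 else 0].

Definition bra_ket (R : realType) (n : nat) (z : basis n) (psi : qstate R n) : R[i] :=
  psi z.

Definition proj_expect (R : realType) (n : nat) (z : basis n) (psi : qstate R n) : R[i] :=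
  (psi z)^* * psi z.

Definition HC (R : realType) (n : nat) (f : basis n -> R) (psi : qstate R n) : qstate R n :=
  [ffun x => (f x)%:C * psi x].

Definition cexpi (R : realType) (t : R) : R[i] := Complex (cos t) (sin t).

Definition UC (R : realType) (n : nat) (f : basis n -> R) (gamma : R)
  (psi : qstate R n) : qstate R n :=
  [ffun x => cexpi (- (gamma * f x)) * psi x].

Definition flip (n : nat) (t : 'I_n) (x : basis n) : basis n :=
  [ffun j : 'I_n => if j == t then ~~ x j else x j].

(* R_X(beta) = e^{-i beta X/2} = cos(beta/2) I - i sin(beta/2) X applied to
   qubit t *)
Definition RX (R : realType) (n : nat) (t : 'I_n) (beta : R) (psi : qstate R n)
  : qstate R n :=
  [ffun x => (cos (beta / 2))%:C * psi x - 'i * (sin (beta / 2))%:C * psi (flip t x)].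

(* target of the gate controlled by qubit k (0-indexed): (k+1) mod n,
   i.e. qubit 1 + (i mod n) for the paper's 1-indexed i = k+1 *)
Definition target (n : nat) (k : 'I_n) : 'I_n :=
  Ordinal (ltn_pmod k.+1 (leq_ltn_trans (leq0n k) (ltn_ord k))).

Definition Gate (R : realType) (n : nat) (zeta : basis n) (k : 'I_n) (beta : R)
  (psi : qstate R n) : qstate R n :=
  [ffun x : basis n => if x k == zeta k then psi x else RX (target k) beta psi x].

(* U_M^{CM}(beta) = G_n(beta) ... G_1(beta): G for qubit 0 applied first *)
Definition UM (R : realType) (n : nat) (zeta : basis n) (beta : R)
  (psi : qstate R n) : qstate R n :=
  foldl (fun phi (k : 'I_n) => Gate zeta k beta phi) psi (enum 'I_n).

Definition qaoa (R : realType) (n p : nat) (zeta : basis n) (f : basis n -> R)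
  (beta gamma : 'I_p -> R) (s : qstate R n) : qstate R n :=
  foldl (fun phi (l : 'I_p) => UM zeta (beta l) (UC f (gamma l) phi)) s (enum 'I_p).

(* Every gate G_k acts as the identity on basis states whose k-th qubit equals
   zeta_k, so the mixer never moves amplitude into or out of |zeta>; and the
   phase separator multiplies the amplitude of |zeta> by e^{-i gamma f(zeta)} = 1
   because H_C |zeta> = 0.  Hence every layer fixes <zeta|psi>. *)
From HB Require Import structures.
From mathcomp Require Import all_boot all_order all_algebra.
From mathcomp Require Import complex.
From mathcomp Require Import reals trigo.
Import Order.TTheory GRing.Theory Num.Theory.
Local Open Scope ring_scope.
Local Open Scope complex_scope.

Lemma cexpi0 (R : realType) : cexpi (0 : R) = 1.
Proof. by rewrite /cexpi cos0 sin0. Qed.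

Lemma cost_eq0_of_HC_ket (R : realType) (n : nat) (f : basis n -> R) (z : basis n) :
  HC f (ket R z) = 0 -> f z = 0.
Proof.
move/(congr1 (fun v : qstate R n => v z)).
rewrite !ffunE eqxx mulr1 => /(congr1 (@complex.Re R)); exact.
Qed.

Lemma UC_id_on_zero_cost (R : realType) (n : nat) (f : basis n -> R) (gamma : R)
    (psi : qstate R n) (x : basis n) :
  f x = 0 -> UC f gamma psi x = psi x.
Proof. by move=> fx0; rewrite ffunE fx0 mulr0 oppr0 cexpi0 mul1r. Qed.

Lemma Gate_id_on_inactive (R : realType) (n : nat) (zeta : basis n) (k : 'I_n)
    (beta : R) (psi : qstate R n) (x : basis n) :
  x k = zeta k -> Gate zeta k beta psi x = psi x.
Proof. by move=> xk; rewrite ffunE xk eqxx. Qed.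

Lemma UM_fixes_zeta (R : realType) (n : nat) (zeta : basis n) (beta : R)
    (psi : qstate R n) :
  UM zeta beta psi zeta = psi zeta.
Proof.
rewrite /UM; elim: (enum 'I_n) psi => [|k ks IH] psi //=.
by rewrite IH Gate_id_on_inactive.
Qed.

Lemma qaoa_fixes_zeta (R : realType) (n p : nat) (zeta : basis n)
    (f : basis n -> R) (beta gamma : 'I_p -> R) (s : qstate R n) :
  f zeta = 0 -> qaoa zeta f beta gamma s zeta = s zeta.
Proof.
move=> fzeta0; rewrite /qaoa; elim: (enum 'I_p) s => [|l ls IH] s //=.
by rewrite IH UM_fixes_zeta UC_id_on_zero_cost.
Qed.

Theorem proposition1 (R : realType) (n : nat) (zeta : basis n)
  (f : basis n -> R) (p : nat) (beta gamma : 'I_p -> R) (s : qstate R n) :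
  (2 <= n)%N -> (1 <= p)%N ->
  HC f (ket R zeta) = 0 ->
  bra_ket zeta (qaoa zeta f beta gamma s) = bra_ket zeta s /\
  proj_expect zeta (qaoa zeta f beta gamma s) = proj_expect zeta s.
Proof.
move=> _ _ /cost_eq0_of_HC_ket fzeta0.
by rewrite /bra_ket /proj_expect qaoa_fixes_zeta.
Qed.
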